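(* Let $G$ be a Tanner graph representing the binary code $\mathcal{C}$, and let $p$ be a lift-realizable pseudocodeword of $G$. Then $p$ can be written as $p=c^{(1)}+c^{(2)}+\cdots+c^{(k)}+r$, where $c^{(1)},\dots,c^{(k)}\in\mathcal{C}$ are (not necessarily distinct) codewords and $r$ is a nonnegative integer vector such that no nonzero codeword $c\in\mathcal{C}$ has $\operatorname{supp}(c)\subseteq\operatorname{supp}(r)$; moreover, either $r$ is the all-zeros vector or every entry of $r$ is $0$ or even.
   Context: A Tanner graph $G$ is a finite bipartite graph with variable nodes $v_1,\dots,v_n$ and check nodes; its code $\mathcal{C}$ consists of all $x\in\{0,1\}^n$ with every check node having an even number of neighbours $v_i$ with $x_i=1$. A degree-$\ell$ lift replaces each node by $\ell$ copies and each edge by a perfect matching between copy-sets; a lift-realizable pseudocodeword $p\in\mathbb{Z}_{\ge0}^n$ is obtained from a codeword of the code of a finite lift by letting $p_i$ be the number of copies of $v_i$ assigned 1. $\operatorname{supp}(x)=\{i:x_i\neq0\}$. *)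

From mathcomp Require Import all_boot all_fingroup.
Set Implicit Arguments. Unset Strict Implicit. Unset Printing Implicit Defensive.

(* A (finite, simple) bipartite graph with variable nodes V and check nodes C,
   given by its adjacency relation H : C -> V -> bool.  A Tanner graph with n
   variable nodes and m check nodes is the case V = 'I_n, C = 'I_m. *)

Definition in_code (V C : finType) (H : C -> V -> bool) (x : V -> bool) : Prop :=
  forall j : C, ~~ odd #|[pred i | H j i && x i]|.

(* Degree-l lift: each node v is replaced by copies (v, a), a : 'I_l, and each
   edge (j, i) by the perfect matching (j, a) -- (i, pi j i a) between the
   copy-sets (pi j i is only used when (j, i) is an edge). *)
Definition lift_adj (n m l : nat) (H : 'I_m -> 'I_n -> bool)
    (pi : 'I_m -> 'I_n -> {perm 'I_l}) :
    ('I_m * 'I_l)%type -> ('I_n * 'I_l)%type -> bool :=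
  fun ja ib => H ja.1 ib.1 && (pi ja.1 ib.1 ja.2 == ib.2).

Definition lift_realizable (n m : nat) (H : 'I_m -> 'I_n -> bool)
    (p : 'I_n -> nat) : Prop :=
  exists (l : nat) (pi : 'I_m -> 'I_n -> {perm 'I_l})
         (x : ('I_n * 'I_l)%type -> bool),
    0 < l /\ in_code (lift_adj H pi) x /\
    forall i : 'I_n, p i = #|[pred b : 'I_l | x (i, b)]|.

Definition supp_b (n : nat) (c : 'I_n -> bool) : {set 'I_n} := [set i | c i].
Definition supp_n (n : nat) (r : 'I_n -> nat) : {set 'I_n} := [set i | r i != 0].

From mathcomp Require Import all_boot all_fingroup.
From Stdlib Require Import Classical.

Set Implicit Arguments.
Unset Strict Implicit.
Unset Printing Implicit Defensive.

(* The parity vector of a lift-realizable pseudocodeword p is a codeword: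
   counting in two ways the pairs (copy of a check node j, adjacent copy
   assigned 1) in the lift shows that \sum_(i ~ j) p i is even.  Whenever the
   parity vector of r is a codeword and some nonzero codeword c has
   supp c \subset supp r, then r - c is again such a vector, of smaller total
   weight.  Peeling off codewords until none fits under the support leaves a
   remainder whose parity vector is a codeword supported inside supp r, which
   is therefore zero: every entry of the remainder is even. *)

Lemma card_andE (T : finType) (P Q : pred T) :
  #|[pred i | P i && Q i]| = \sum_(i | P i) Q i.
Proof. by rewrite -sum1_card big_mkcondr /=; apply: eq_bigr => i _; case: (Q i). Qed.

Lemma odd_sum_congr (T : finType) (P : pred T) (f g : T -> nat) :
  (forall i, odd (f i) = odd (g i)) ->
  odd (\sum_(i | P i) f i) = odd (\sum_(i | P i) g i).
Proof.
move=> odd_fg; apply: (big_ind2 (fun a b => odd a = odd b)) => //.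
by move=> a b c d odd_ab odd_cd; rewrite !oddD odd_ab odd_cd.
Qed.

Section LinearCode.

Variables (V C : finType) (H : C -> V -> bool).

Definition parity (r : V -> nat) : V -> bool := fun i => odd (r i).

Lemma eq_in_code (x y : V -> bool) : x =1 y -> in_code H x <-> in_code H y.
Proof.
move=> eq_xy; rewrite /in_code.
suff eq_card j : #|[pred i | H j i && x i]| = #|[pred i | H j i && y i]|.
  by split=> code j; [rewrite -eq_card | rewrite eq_card].
by apply: eq_card => i; rewrite !inE eq_xy.
Qed.

Lemma in_codeE (x : V -> bool) (g : V -> nat) :
  x =1 parity g -> in_code H x <-> forall j, ~~ odd (\sum_(i | H j i) g i).
Proof.
move=> /eq_in_code ->; rewrite /in_code.
suff odd_card j : odd #|[pred i | H j i && parity g i]| = odd (\sum_(i | H j i) g i).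
  by split=> even_g j; [rewrite -odd_card | rewrite odd_card].
by rewrite card_andE; apply: odd_sum_congr => i; rewrite oddb.
Qed.

Lemma in_codeD (x y : V -> bool) :
  in_code H x -> in_code H y -> in_code H (fun i => x i (+) y i).
Proof.
have parity_b (z : V -> bool) : z =1 parity z by move=> i; rewrite /parity oddb.
move=> /(in_codeE (parity_b x)) even_x /(in_codeE (parity_b y)) even_y.
apply/(in_codeE (g := fun i => x i + y i)) => [i|j]; first by rewrite /parity oddD !oddb.
by rewrite big_split oddD (negbTE (even_x j)) (negbTE (even_y j)).
Qed.

Lemma in_code_parityB (r : V -> nat) (c : V -> bool) :
  (forall i, c i <= r i) -> in_code H c -> in_code H (parity r) ->
  in_code H (parity (fun i => r i - c i)).
Proof.
move=> le_cr code_c code_r.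
have parity_sub : parity (fun i => r i - c i) =1 (fun i => parity r i (+) c i).
  by move=> i; rewrite /parity oddB // oddb.
by apply/(eq_in_code parity_sub); apply: in_codeD.
Qed.

End LinearCode.

Section Lift.

Variables (n m l : nat) (H : 'I_m -> 'I_n -> bool).
Variables (pi : 'I_m -> 'I_n -> {perm 'I_l}) (x : ('I_n * 'I_l)%type -> bool).

Lemma card_lift_nbhd (j : 'I_m) (a : 'I_l) :
  #|[pred ib | lift_adj H pi (j, a) ib && x ib]| = \sum_(i | H j i) x (i, pi j i a).
Proof.
rewrite card_andE (eq_bigr (fun ib => x (ib.1, ib.2) : nat)) => [|[] //].
rewrite -(pair_big_dep (H j) (fun i b => pi j i a == b) (fun i b => x (i, b) : nat)) /=.
by apply: eq_bigr => i _; rewrite (big_pred1 (pi j i a)) // => b; rewrite eq_sym.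
Qed.

Lemma lift_double_count (j : 'I_m) :
  \sum_(a < l) #|[pred ib | lift_adj H pi (j, a) ib && x ib]| =
  \sum_(i | H j i) #|[pred b | x (i, b)]|.
Proof.
rewrite (eq_bigr _ (fun a _ => card_lift_nbhd j a)) exchange_big /=; apply: eq_bigr => i _.
rewrite -sum1_card [RHS](reindex_inj (@perm_inj _ (pi j i))) [RHS]big_mkcond /=.
by apply: eq_bigr => a _; rewrite inE; case: (x _).
Qed.

End Lift.

Lemma lift_realizable_parity (n m : nat) (H : 'I_m -> 'I_n -> bool) (p : 'I_n -> nat) :
  lift_realizable H p -> in_code H (parity p).
Proof.
case=> l [pi [x [_ [code_x p_card]]]]; apply/(@in_codeE _ _ H _ p) => // j.
rewrite (eq_bigr _ (fun i _ => p_card i)) -(@lift_double_count _ _ _ H pi x).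
apply: (big_ind (fun s => ~~ odd s)) => [//|s t even_s even_t|a _].
  by rewrite oddD (negbTE even_s) (negbTE even_t).
exact: code_x (j, a).
Qed.

Section Peeling.

Variables (n : nat) (C : finType) (H : C -> 'I_n -> bool).

Definition codeword_decomposable (p : 'I_n -> nat) : Prop :=
  exists (k : nat) (c : 'I_k -> 'I_n -> bool) (r : 'I_n -> nat),
    (forall t : 'I_k, in_code H (c t)) /\
    (forall i : 'I_n, p i = (\sum_(t < k) c t i + r i)%N) /\
    (forall c' : 'I_n -> bool, in_code H c' -> (exists i, c' i) ->
       ~ (supp_b c' \subset supp_n r)) /\
    ((forall i : 'I_n, r i = 0%N) \/ (forall i : 'I_n, r i = 0%N \/ ~~ odd (r i))).

Lemma codeword_decomposableD (c : 'I_n -> bool) (r1 r : 'I_n -> nat) :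
  in_code H c -> (forall i, r i = c i + r1 i) ->
  codeword_decomposable r1 -> codeword_decomposable r.
Proof.
move=> code_c r_def [k [cs [rest [code_cs [r1_def rest_free]]]]].
exists k.+1, (fun t => if unlift ord0 t is Some t' then cs t' else c), rest.
split; first by move=> t; case: (unlift ord0 t).
split=> // i; rewrite big_ord_recl /= unlift_none r_def r1_def addnA.
by congr (_ + _ + _); apply: eq_bigr => t _; rewrite liftK.
Qed.

Lemma codeword_decomposable_free (r : 'I_n -> nat) :
  in_code H (parity r) ->
  (forall c, in_code H c -> (exists i, c i) -> ~ (supp_b c \subset supp_n r)) ->
  codeword_decomposable r.
Proof.
move=> code_r r_free; exists 0, (fun _ _ => false), r.
split; first by case.
split; first by move=> i; rewrite big_ord0.
split; first exact: r_free.
right=> i; right; apply/negP => odd_ri; apply: (r_free _ code_r); first by exists i.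
by apply/subsetP => i'; rewrite !inE /parity; case: (r i').
Qed.

Lemma supp_subset_le (c : 'I_n -> bool) (r : 'I_n -> nat) :
  supp_b c \subset supp_n r -> forall i, c i <= r i.
Proof.
move=> /subsetP sub_cr i; case ci: (c i) => //=.
by have := sub_cr i; rewrite !inE ci lt0n => ->.
Qed.

Lemma sum_subn_lt (c : 'I_n -> bool) (r : 'I_n -> nat) :
  (forall i, c i <= r i) -> (exists i, c i) ->
  \sum_i (r i - c i) < \sum_i r i.
Proof.
move=> le_cr [i0 ci0]; have sum_c_gt0 : 0 < \sum_i c i by rewrite (bigD1 i0) //= ci0.
rewrite sumnB // ltn_subrL sum_c_gt0 /=.
by apply: (leq_trans sum_c_gt0); apply: leq_sum => i _.
Qed.

Lemma parity_code_decomposable (r : 'I_n -> nat) :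
  in_code H (parity r) -> codeword_decomposable r.
Proof.
have [N] := ubnP (\sum_i r i); elim: N r => // N IH r lt_r_N code_r.
have [[c [code_c [c_nz sub_cr]]]|r_free] :=
  classic (exists c, in_code H c /\ (exists i, c i) /\ supp_b c \subset supp_n r).
  have le_cr := supp_subset_le sub_cr.
  apply: (codeword_decomposableD (r1 := fun i => r i - c i) code_c).
    by move=> i; rewrite subnKC.
  apply: IH; last exact: in_code_parityB.
  by rewrite -ltnS (leq_trans _ lt_r_N) // ltnS sum_subn_lt.
apply: codeword_decomposable_free => // c code_c c_nz sub_cr.
by apply: r_free; exists c.
Qed.

End Peeling.

Theorem lemma5 (n m : nat) (H : 'I_m -> 'I_n -> bool) (p : 'I_n -> nat) :
  lift_realizable H p ->
  exists (k : nat) (c : 'I_k -> 'I_n -> bool) (r : 'I_n -> nat),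
    (forall t : 'I_k, in_code H (c t)) /\
    (forall i : 'I_n, p i = (\sum_(t < k) c t i + r i)%N) /\
    (forall c' : 'I_n -> bool, in_code H c' -> (exists i, c' i) ->
       ~ (supp_b c' \subset supp_n r)) /\
    ((forall i : 'I_n, r i = 0%N) \/ (forall i : 'I_n, r i = 0%N \/ ~~ odd (r i))).
Proof.
by move=> /lift_realizable_parity /parity_code_decomposable.
Qed.
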